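(* The expected runtime (number of fitness evaluations) of the (1+1)~IA$^{\text{hyp}}_{\ge}$ on $\textsc{LeadingOnes}(x)=\sum_{i=1}^n\prod_{j=1}^i x_j$ is $\Theta(n^3)$.
   Context: The (1+1)~IA$^{\text{hyp}}_{\ge}$ keeps one bit string $x\in\{0,1\}^n$ (uniformly random initially); each iteration it creates $y$ by static hypermutation with FCM and sets $x:=y$ if $f(y)\ge f(x)$ (maximisation). Static hypermutation with FCM has a constant parameter $0<c\le1$ and mutation potential $M=cn$ (an integer): distinct bit positions are chosen uniformly at random without replacement and flipped one after another; each intermediate string is evaluated (one fitness evaluation each); the process stops at the first string $z$ with $f(z)\ge f(x)$ (constructive mutation) or after $M$ flips, and the last string is $y$. *)

From HB Require Import structures.
From mathcomp Require Import all_boot all_order all_algebra.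
From mathcomp Require Import all_classical all_reals all_analysis.
Unset Printing Implicit Defensive.
Import Order.TTheory GRing.Theory Num.Theory.
Local Open Scope ring_scope.

(* bit strings of length n; position i : 'I_n corresponds to x_{i+1} *)
Definition bs (n : nat) := {ffun 'I_n -> bool}.

Definition LO (n : nat) (x : bs n) : nat :=
  (\sum_(i < n) \prod_(j < n | (j <= i)%N) nat_of_bool (x j))%N.

Definition opt (n : nat) : bs n := [ffun => true].

Definition flip (n : nat) (z : bs n) (i : 'I_n) : bs n :=
  [ffun j => if j == i then ~~ z j else z j].

(* State of the algorithm between two fitness evaluations:
   (current search point x, current intermediate string z of the running
   hypermutation, set S of positions already flipped in this hypermutation).
   A fresh hypermutation is represented by (x, x, set0). *)
Definition state (n : nat) := (bs n * bs n * {set 'I_n})%type.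

(* Effect of flipping the (fresh) position i and evaluating the result.
   None = the evaluated string is the optimum 1^n (the run stops). *)
Definition next (n M : nat) (s : state n) (i : 'I_n) : option (state n) :=
  let: (x, z, F) := s in
  let z' := flip n z i in
  if z' == opt n then None
  else if (LO n x <= LO n z')%N then Some (z', z', (@finset.set0 _ : {set 'I_n}))   (* constructive: stop, accept *)
  else if #|F|.+1 == M then Some (x, x, (@finset.set0 _ : {set 'I_n}))
  else Some (x, z', (finset.setU (finset.set1 i) F)).

(* One fitness evaluation: a position not yet flipped is chosen uniformly. *)
Definition kernel (R : realType) (n M : nat) (s s' : state n) : R :=
  let: (_, _, F) := s in
  if (#|F| < M)%N then
    \sum_(i | i \notin F) (((n - #|F|)%N)%:R^-1 * (next n M s i == Some s')%:R)
  else 0.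

(* (Sub-)distribution after the first evaluation (the uniform initial x),
   restricted to runs that have not yet evaluated the optimum. *)
Definition init (R : realType) (n : nat) : {ffun state n -> R} :=
  [ffun s => let: (x, z, F) := s in
     if [&& z == x, F == (@finset.set0 _ : {set 'I_n}) & x != opt n] then ((2%:R : R) ^+ n)^-1 else 0].

Definition step (R : realType) (n M : nat) (d : {ffun state n -> R})
  : {ffun state n -> R} :=
  [ffun s' => \sum_(s : state n) d s * kernel R n M s s'].

(* dist k = sub-distribution after k+1 evaluations, optimum not yet evaluated *)
Definition dist (R : realType) (n M : nat) (k : nat) : {ffun state n -> R} :=
  iter k (step R n M) (init R n).

(* surv t = Pr[T > t], T = number of fitness evaluations until the
   optimum is evaluated for the first time *)
Definition surv (R : realType) (n M : nat) (t : nat) : R :=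
  if t is t'.+1 then \sum_(s : state n) dist R n M t' s else 1.

(* E[T] = sum_{t >= 0} Pr[T > t]  (in the extended reals) *)
Definition expected_runtime (R : realType) (n M : nat) : \bar R :=
  (\sum_(t <oo) (surv R n M t)%:E)%E.

(* On reachable states, a hypermutation whose first flip was not
   constructive has turned a bit below LO x into 0, so it is doomed to end by
   rejection after exactly M evaluations.  Hence the potential
   h (LO x) + (number of evaluations still to be spent by a doomed hypermutation)
   drops by exactly 1 per evaluation, except in fresh states at level k, where
   its expected change is -1 + (n + k (M - 1) + h k' - h k) / n, with k' the
   level reached by flipping bit k.  For h the tail sums of the level costs
   n + j (M - 1) this excess is nonpositive, so E[T] <= 1 + h 0 = O(n^3).
   Conversely, the law of the chain is invariant under flipping a bit above
   LO x, so an improvement from level k skips each further level with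
   probability 1/2; for h the tail sums of (M - 1) j / 4 it thus loses at most
   (M - 1) (k + 1) / 2 <= n + k (M - 1) potential in expectation, the excess
   is nonnegative, and E[T] >= h 0 / 4 = Omega(n^3). *)

From mathcomp Require Import all_boot all_order all_algebra.
From mathcomp Require Import all_classical all_reals all_analysis.
From mathcomp Require Import zify.
From mathcomp.algebra_tactics Require Import ring lra.
Import Order.TTheory GRing.Theory Num.Theory.
Set Implicit Arguments. Unset Strict Implicit. Unset Printing Implicit Defensive.
Local Open Scope ring_scope.

Arguments next : simpl never.

Lemma sum_ord_ltn m k : (\sum_(i < m) (i < k))%N = minn m k.
Proof.
elim: m => [|m IH]; first by rewrite big_ord0 min0n.
by rewrite big_ord_recr /= IH; case: (ltnP m k); lia.
Qed.

Section LeadingOnes.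
Variable n : nat.
Implicit Types (x y : bs n) (i j : 'I_n).

Lemma LO_eq x k : (k <= n)%N -> (forall j, (j < k)%N -> x j) ->
  (forall j, j = k :> nat -> ~~ x j) -> LO n x = k.
Proof.
move=> kn xlt xk; rewrite /LO.
transitivity (\sum_(i < n) (i < k))%N; last by rewrite sum_ord_ltn; lia.
apply: eq_bigr => i _; case: (ltnP i k) => ik.
  by rewrite big1 // => j ji; rewrite xlt //; lia.
have kn' : (k < n)%N by apply: leq_ltn_trans (ltn_ord i).
by rewrite (bigD1 (Ordinal kn')) //= (negbTE (xk (Ordinal kn') erefl)).
Qed.

Lemma LO_spec x :
  [/\ (LO n x <= n)%N, forall j, (j < LO n x)%N -> x j &
      forall j, j = LO n x :> nat -> ~~ x j].
Proof.
pose blocked k := (n <= k)%N || [exists j : 'I_n, (j == k :> nat) && ~~ x j].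
have blocked_n : blocked n by rewrite /blocked leqnn.
have [k blocked_k k_min] := ex_minnP (ex_intro _ n blocked_n).
have kn : (k <= n)%N by apply: k_min; rewrite /blocked leqnn.
have xlt j : (j < k)%N -> x j.
  move=> jk; apply/negPn/negP => xj.
  suff : (k <= j)%N by lia.
  by apply: k_min; apply/orP; right; apply/existsP; exists j; rewrite eqxx.
have xk j : j = k :> nat -> ~~ x j.
  move=> jk; case/orP: blocked_k => [|/existsP [j' /andP [/eqP j'k]]].
    by have := ltn_ord j; lia.
  by have -> : j = j' by apply: val_inj; rewrite /= jk j'k.
by rewrite (LO_eq kn xlt xk).
Qed.

Lemma LO_le x : (LO n x <= n)%N.
Proof. by case: (LO_spec x). Qed.

Lemma LO_prefix x j : (j < LO n x)%N -> x j.
Proof. by case: (LO_spec x) => _ + _; apply. Qed.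

Lemma LO_first_zero x j : j = LO n x :> nat -> x j = false.
Proof. by case: (LO_spec x) => _ _ /[apply] /negbTE. Qed.

Lemma LO_ge x k : (k <= n)%N -> (forall j, (j < k)%N -> x j) -> (k <= LO n x)%N.
Proof.
move=> kn xlt; rewrite leqNgt; apply/negP => Lk.
have Ln : (LO n x < n)%N by lia.
by move: (xlt (Ordinal Ln) Lk); rewrite LO_first_zero.
Qed.

Lemma LO_opt x : (x == opt n) = (LO n x == n).
Proof.
apply/eqP/eqP => [->|Ln].
  apply: LO_eq => // j; rewrite ffunE // => jn.
  by have := ltn_ord j; rewrite jn ltnn.
by apply/ffunP => j; rewrite ffunE; apply: LO_prefix; rewrite Ln.
Qed.

Lemma LO_lt_n x : (LO n x < n)%N = (x != opt n).
Proof. by rewrite LO_opt ltn_neqAle LO_le andbT. Qed.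

Lemma flipE y i j : flip n y i j = if j == i then ~~ y j else y j.
Proof. by rewrite ffunE. Qed.

Lemma flipK i : involutive (flip n ^~ i).
Proof. by move=> y; apply/ffunP => j; rewrite !flipE; case: eqP; rewrite ?negbK. Qed.

Lemma flip_inj i : injective (flip n ^~ i).
Proof. exact: inv_inj (flipK i). Qed.

Lemma flipC y i j : flip n (flip n y i) j = flip n (flip n y j) i.
Proof. by apply/ffunP => l; rewrite !flipE; case: (l =P i); case: (l =P j). Qed.

Lemma LO_flip_above y i : (LO n y < i)%N -> LO n (flip n y i) = LO n y.
Proof.
move=> Li; apply: LO_eq (LO_le y) _ _ => j jL; rewrite flipE.
  by case: eqP => [ji|_]; [subst; lia | exact: LO_prefix].
by case: eqP => [ji|_]; [subst; lia | rewrite LO_first_zero].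
Qed.

Lemma LO_flip_below y i : (i < LO n y)%N -> LO n (flip n y i) = i.
Proof.
move=> iL; apply: LO_eq => [|j ji|j /val_inj ->]; rewrite ?flipE.
- exact: ltnW.
- by case: eqP => [e|_]; [subst; lia | apply: LO_prefix; lia].
- by rewrite eqxx negbK LO_prefix.
Qed.

Lemma LO_flip_at y i : (i < LO n (flip n y i))%N = (LO n y == i).
Proof.
apply/idP/eqP => [|Li].
  by move=> /LO_flip_below; rewrite flipK => ->.
apply: LO_ge (ltn_ord i) _ => j ji; rewrite flipE.
case: eqP => [->|/eqP ne]; first by rewrite LO_first_zero.
by apply: LO_prefix; rewrite Li ltn_neqAle val_eqE ne -ltnS.
Qed.

Lemma LO_flip_ge y i : (i <= LO n (flip n y i))%N = (i <= LO n y)%N.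
Proof.
case: (ltngtP (LO n y) i) => [Li|iL|Li].
- by rewrite LO_flip_above // leqNgt Li.
- by rewrite LO_flip_below // leqnn.
- by rewrite leq_eqVlt LO_flip_at Li eqxx orbT.
Qed.

End LeadingOnes.

Lemma sum_indicator_Some (R : pzSemiRingType) (T : finType) (g : T -> R) (o : option T) :
  \sum_a (o == Some a)%:R * g a = oapp g 0 o.
Proof.
case: o => [a|] /=; last by rewrite big1 // => b _; rewrite mul0r.
rewrite (bigD1 a) //= eqxx mul1r big1 ?addr0 // => b ba.
by case: eqP => [[ab]|_]; [rewrite ab eqxx in ba | rewrite mul0r].
Qed.

Lemma sum_indicator_ord (R : pzSemiRingType) n k (kn : (k < n)%N) (f : 'I_n -> R) :
  \sum_(i < n) (k == i)%:R * f i = f (Ordinal kn).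
Proof.
rewrite -[RHS]/(oapp f 0 (Some (Ordinal kn))) -sum_indicator_Some.
apply: eq_bigr => i _.
by congr (_%:R * _); apply/eqP/eqP => [ki|[<-]//]; congr Some; apply: val_inj.
Qed.

Lemma sum_notin_const (R : pzSemiRingType) n (F : {set 'I_n}) (c : R) :
  \sum_(i | i \notin F) c = (n - #|F|)%:R * c.
Proof.
rewrite (eq_bigl (mem (~: F))) => [|i]; last by rewrite !inE.
by rewrite sumr_const cardsCs finset.setCK card_ord mulr_natl.
Qed.

Section Chain.
Variables (R : realType) (n M : nat).
Implicit Types s : state n.

Lemma next_LO_mono s i s' : next n M s i = Some s' -> (LO n s.1.1 <= LO n s'.1.1)%N.
Proof.
case: s => [[x z] F]; rewrite /next; case: ifP => // _.
by case: ifP => [? [<-] // | _]; case: ifP => _ [<-].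
Qed.

Lemma next_constructive s i s' : (LO n s.1.1 <= LO n (flip n s.1.2 i))%N ->
  next n M s i = Some s' -> s'.1.1 = flip n s.1.2 i.
Proof. by case: s => [[x z] F] /= constr; rewrite /next constr; case: ifP => // _ [<-]. Qed.

Lemma kernel_ge0 s s' : 0 <= kernel R n M s s'.
Proof.
case: s => [[x z] F]; rewrite /kernel; case: ifP => // _.
by apply: sumr_ge0 => i _; rewrite mulr_ge0 ?invr_ge0 ?ler0n.
Qed.

Lemma kernel_LO s s' : (LO n s'.1.1 < LO n s.1.1)%N -> kernel R n M s s' = 0.
Proof.
case: s => [[x z] F] LO_dec; rewrite /kernel; case: ifP => // _.
rewrite big1 // => i _; case: eqP => [/next_LO_mono|]; last by rewrite mulr0.
by move: LO_dec => /=; lia.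
Qed.

Lemma kernel_expect (g : state n -> R) s :
  \sum_s' kernel R n M s s' * g s' =
  if (#|s.2| < M)%N
  then (n - #|s.2|)%:R^-1 * \sum_(i | i \notin s.2) oapp g 0 (next n M s i)
  else 0.
Proof.
case: s => [[x z] F]; rewrite /kernel /=; case: ifP => _; last first.
  by rewrite big1 // => s' _; rewrite mul0r.
under eq_bigr do rewrite mulr_suml.
rewrite exchange_big mulr_sumr; apply: eq_bigr => i _.
by rewrite -sum_indicator_Some mulr_sumr; apply: eq_bigr => s' _; rewrite mulrA.
Qed.

Lemma distS t s' : dist R n M t.+1 s' = \sum_s dist R n M t s * kernel R n M s s'.
Proof. by rewrite /dist iterS ffunE. Qed.

Lemma dist_ge0 t s : 0 <= dist R n M t s.
Proof.
elim: t s => [[[x z] F]|t IH s']; last first.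
  by rewrite distS; apply: sumr_ge0 => s _; rewrite mulr_ge0 ?kernel_ge0.
by rewrite /dist /= ffunE; case: ifP; rewrite ?invr_ge0 ?exprn_ge0 ?ler0n.
Qed.

Lemma kernel_row_le1 s : \sum_s' kernel R n M s s' <= 1.
Proof.
under eq_bigr do rewrite -[kernel _ _ _ _ _]mulr1.
rewrite (kernel_expect (fun=> 1)); case: ifP => // _.
have [->|nF] := eqVneq ((n - #|s.2|)%:R : R) 0; first by rewrite invr0 mul0r.
rewrite -[X in _ <= X](mulVf nF) ler_wpM2l ?invr_ge0 ?ler0n //.
rewrite -[X in _ <= X]mulr1 -sum_notin_const.
by apply: ler_sum => i _; case: next.
Qed.

End Chain.

Section Drift.
Variables (R : realType) (n M : nat).
Hypotheses (M_gt0 : (0 < M)%N) (M_le_n : (M <= n)%N).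
Implicit Types (s : state n) (h : nat -> R).

Definition fresh s : bool := let: (x, z, F) := s in (z == x) && (F == finset.set0).

(* Mid-hypermutation, some already flipped bit below LO x reads 0: every later
   intermediate string is then worse than x, so the hypermutation is doomed to
   use up all M flips. *)
Definition wf_state s : bool :=
  let: (x, z, F) := s in (x != opt n) &&
    (fresh s || (#|F| < M)%N && [exists j in F, (j < LO n x)%N && ~~ z j]).

Definition potential h s : R :=
  let: (x, _, F) := s in (if F == finset.set0 then 0 else (M - #|F|)%:R) + h (LO n x).

Definition fresh_drift h s : R :=
  let: (x, _, _) := s in
  if fresh s then
    n%:R^-1 * \sum_(i < n) (LO n x == i)%:R *
      (n%:R + i%:R * (M%:R - 1) + h (LO n (flip n x i)) - h i)
  else 0.

Lemma wf_card s : wf_state s -> (#|s.2| < M)%N.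
Proof.
case: s => [[x z] F] /andP [_ /orP [/andP [_ /eqP ->]|/andP []//]].
by rewrite cards0.
Qed.

Lemma next_wf s i s' : wf_state s -> i \notin s.2 -> next n M s i = Some s' -> wf_state s'.
Proof.
case: s => [[x z] F] /andP [xo wf] /= iF.
rewrite /next; case: ifP => // zo; case: ifP => [_ [<-] | not_constr].
  by rewrite /= zo !eqxx.
case: ifP => [_ [<-] | FM [<-]] /=; first by rewrite xo !eqxx.
rewrite xo /= cardsU1 iF add1n.
have FM' : (#|F| < M)%N by apply: (wf_card (s := (x, z, F))); rewrite /= xo wf.
have -> /= : (#|F|.+1 < M)%N by rewrite ltn_neqAle FM FM'.
apply/orP; right.
case/orP: wf => [/andP [/eqP zx /eqP F0]|/andP [_ /existsP [j /and3P [jF jx zj]]]].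
  subst z F; apply/existsP; exists i; rewrite setU11 /= flipE eqxx negbK.
  have ix : (i < LO n x)%N.
    rewrite ltnNge; apply: contraFN not_constr => xi.
    case: (ltngtP (LO n x) i) xi => // [xi|xi] _; first by rewrite LO_flip_above.
    by rewrite {1}xi ltnW // LO_flip_at xi.
  by rewrite ix LO_prefix.
apply/existsP; exists j; rewrite setU1r //= jx flipE.
by case: eqP => [ji|//]; rewrite -ji jF in iF.
Qed.

Lemma kernel_wf s s' : wf_state s -> ~~ wf_state s' -> kernel R n M s s' = 0.
Proof.
case: s => [[x z] F] wf wf'; rewrite /kernel; case: ifP => // _.
rewrite big1 // => i iF; case: eqP => [/(next_wf wf iF)|]; last by rewrite mulr0.
by rewrite (negbTE wf').
Qed.

Lemma dist_wf t s : ~~ wf_state s -> dist R n M t s = 0.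
Proof.
elim: t s => [[[x z] F]|t IH s'] wf; last first.
  rewrite distS big1 // => s _.
  by have [/kernel_wf -> //|/IH ->] := boolP (wf_state s); rewrite ?mulr0 ?mul0r.
rewrite /dist /= ffunE; case: ifP => // /and3P [zx F0 xo].
by rewrite /= xo zx F0 in wf.
Qed.

Lemma drift_mid h s : wf_state s -> s.2 != finset.set0 ->
  \sum_s' kernel R n M s s' * potential h s' = potential h s - 1.
Proof.
case: s => [[x z] F] /andP [xo wf] F0; rewrite /= in F0.
have [FM [j /and3P [jF jx zj]]] :
    (#|F| < M)%N /\ exists j, [&& j \in F, (j < LO n x)%N & ~~ z j].
  case/orP: wf => [/andP [_ F0']|/andP [FM /existsP [j jP]]]; last by split => //; exists j.
  by rewrite F0' in F0.
have next_pot i : i \notin F ->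
    oapp (potential h) 0 (next n M (x, z, F) i) = (M - #|F|)%:R + h (LO n x) - 1.
  move=> iF.
  have zi_j : flip n z i j = false.
    by rewrite flipE; case: eqP => [ji|_]; [rewrite -ji jF in iF | exact: negbTE].
  have LO_zi : (LO n (flip n z i) < LO n x)%N.
    by apply: leq_ltn_trans jx; rewrite leqNgt; apply: contraFN zi_j => /LO_prefix.
  have zi_opt : (flip n z i == opt n) = false.
    by apply/negbTE; rewrite -LO_lt_n (leq_trans LO_zi) ?LO_le.
  rewrite /next zi_opt leqNgt LO_zi /=; case: eqP => [FM'|FM'] /=.
    by rewrite eqxx add0r -FM' subSnn; ring.
  have -> : (i |: F == finset.set0) = false.
    by apply/negbTE/set0Pn; exists i; rewrite setU11.
  have -> : (M - #|F|)%N = (M - #|i |: F|).+1 by rewrite cardsU1 iF; lia.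
  by rewrite -natr1; ring.
rewrite kernel_expect /= FM (eq_bigr _ next_pot) sum_notin_const mulrA mulVf ?mul1r.
  by rewrite (negbTE F0).
by rewrite pnatr_eq0 subn_eq0 -ltnNge (leq_trans FM).
Qed.

Lemma potential_next_fresh h x i : h n = 0 ->
  oapp (potential h) 0 (next n M (x, x, finset.set0) i) =
  h (LO n x) + (i < LO n x)%:R * (M%:R - 1)
  + (LO n x == i)%:R * (h (LO n (flip n x i)) - h (LO n x)).
Proof.
move=> hn0; rewrite /next LO_opt; case: (ltngtP i (LO n x)) => [iL|Li|Li].
- rewrite LO_flip_below // leqNgt iL cards0 /=.
  have -> : (i == n :> nat) = false by rewrite ltn_eqF.
  case: eqP => [<-|_] /=; first by rewrite eqxx; ring.
  rewrite finset.setU0 cards1.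
  have -> : ([set i] == finset.set0) = false by apply/negbTE/set0Pn; exists i; rewrite set11.
  by rewrite natrB //; ring.
- rewrite LO_flip_above // leqnn ltn_eqF ?(ltn_trans Li) //=.
  by rewrite eqxx LO_flip_above //; ring.
- case: eqP => [LO_n|_] /=; first by rewrite LO_n hn0; ring.
  have := LO_flip_at x i; rewrite Li eqxx => /ltnW ->.
  by rewrite /= eqxx; ring.
Qed.

Lemma drift_fresh h x : x != opt n -> h n = 0 ->
  \sum_s' kernel R n M (x, x, finset.set0) s' * potential h s' =
  potential h (x, x, finset.set0) - 1 + fresh_drift h (x, x, finset.set0).
Proof.
move=> xo hn0; have xn : (LO n x < n)%N by rewrite LO_lt_n.
rewrite kernel_expect /= cards0 M_gt0 subn0 !eqxx.
under eq_bigl do rewrite finset.in_set0.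
under eq_bigr do rewrite potential_next_fresh //.
rewrite !big_split /= sumr_const card_ord -!mulr_suml -natr_sum sum_ord_ltn.
rewrite (minn_idPr (ltnW xn)) !(sum_indicator_ord xn) /= -mulr_natl.
by field; rewrite pnatr_eq0 -lt0n (leq_ltn_trans _ xn).
Qed.

Lemma drift h s : wf_state s -> h n = 0 ->
  \sum_s' kernel R n M s s' * potential h s' = potential h s - 1 + fresh_drift h s.
Proof.
case: s => [[x z] F] wf hn0; have [F0|F0] := eqVneq F finset.set0.
  subst F; case/andP: wf => xo /orP [/andP [/eqP -> _]|/andP [_ /existsP [j]]].
    exact: drift_fresh.
  by rewrite finset.in_set0.
by rewrite drift_mid //= (negbTE F0) andbF addr0.
Qed.

End Drift.

Section Symmetry.
Variables (R : realType) (n M : nat) (p : 'I_n).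
Implicit Types s : state n.

Definition flip_state s : state n := let: (x, z, F) := s in (flip n x p, flip n z p, F).

Lemma flip_stateK : involutive flip_state.
Proof. by case=> [[x z] F]; rewrite /= !flipK. Qed.

Lemma LO_flip_state s : (LO n s.1.1 < p)%N -> LO n (flip_state s).1.1 = LO n s.1.1.
Proof. by case: s => [[x z] F] /= /LO_flip_above. Qed.

Lemma next_flip_state s i : (LO n s.1.1 < p)%N -> (LO n (flip n s.1.2 i) < p)%N ->
  next n M (flip_state s) i = omap flip_state (next n M s i).
Proof.
case: s => [[x z] F] /= xp zp.
rewrite /next [flip n (flip n z p) i]flipC !LO_opt (LO_flip_above zp) (LO_flip_above xp).
by case: ifP => // _; case: ifP => // _; case: ifP.
Qed.

Lemma next_high s i s' : (LO n s.1.1 < p)%N -> (p <= LO n (flip n s.1.2 i))%N ->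
  (LO n s'.1.1 < p)%N -> (next n M s i == Some s') = false.
Proof.
move=> xp pz x'p; apply/eqP => /next_constructive.
by rewrite (leq_trans (ltnW xp) pz) => /(_ isT) x'E; rewrite x'E in x'p; lia.
Qed.

Lemma kernel_flip_state s s' : (LO n s.1.1 < p)%N -> (LO n s'.1.1 < p)%N ->
  kernel R n M (flip_state s) (flip_state s') = kernel R n M s s'.
Proof.
move=> xp x'p; have fxp := xp; have fx'p := x'p.
rewrite -(LO_flip_state xp) in fxp; rewrite -(LO_flip_state x'p) in fx'p.
case: s s' xp x'p fxp fx'p => [[x z] F] [[x' z'] F'] xp x'p fxp fx'p.
rewrite /kernel /=; case: ifP => // _; apply: eq_bigr => i _; congr (_ * _%:R).
have [zp|pz] := ltnP (LO n (flip n z i)) p.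
  rewrite (next_flip_state (s := (x, z, F))) //; case: next => [s1|] //=.
  rewrite -[(flip n x' p, _, _)]/(flip_state (x', z', F')) !(inj_eq Some_inj).
  by rewrite (inj_eq (inv_inj flip_stateK)).
rewrite !next_high //= flipC LO_flip_ge //.
Qed.

Lemma dist_flip_state t s : (LO n s.1.1 < p)%N ->
  dist R n M t (flip_state s) = dist R n M t s.
Proof.
elim: t s => [|t IH] s xp.
  case: s xp => [[x z] F] /= xp; rewrite /dist /= !ffunE.
  by rewrite (inj_eq (@flip_inj n p)) !LO_opt LO_flip_above.
rewrite !distS (reindex_inj (inv_inj flip_stateK)); apply: eq_bigr => s0 _.
have [x0p|px0] := ltnP (LO n s0.1.1) p; first by rewrite IH // kernel_flip_state.
rewrite !kernel_LO ?mulr0 // ?(LO_flip_state xp); first exact: leq_trans xp px0.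
by case: s0 px0 => [[x0 z0] F0] /= px0; rewrite (leq_trans xp) ?LO_flip_ge.
Qed.

End Symmetry.

Section SurvivingMass.
Variables (R : realType) (n M : nat).
Hypotheses (M_gt0 : (0 < M)%N) (M_le_n : (M <= n)%N).
Implicit Types (s : state n) (h : nat -> R).

Definition mass t : R := \sum_s dist R n M t s.

Definition Phi h t : R := \sum_s dist R n M t s * potential M h s.

Definition excess h t : R := \sum_s dist R n M t s * fresh_drift M h s.

Lemma mass_ge0 t : 0 <= mass t.
Proof. by apply: sumr_ge0 => s _; apply: dist_ge0. Qed.

Lemma mass_nonincr : {homo mass : t u / (t <= u)%N >-> u <= t}.
Proof.
apply/nonincreasing_seqP => t; rewrite /mass.
under eq_bigr do rewrite distS.
rewrite exchange_big /=; apply: ler_sum => s _.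
by rewrite -mulr_sumr ler_piMr ?dist_ge0 ?kernel_row_le1.
Qed.

Lemma PhiS h t : h n = 0 -> Phi h t.+1 = Phi h t - mass t + excess h t.
Proof.
move=> hn0; rewrite /Phi /mass /excess -sumrB -big_split /=.
under eq_bigr do rewrite distS mulr_suml.
rewrite exchange_big; apply: eq_bigr => s _ /=.
under eq_bigr do rewrite -mulrA.
rewrite -mulr_sumr.
have [wf|/(dist_wf R M_gt0 t) ->] := boolP (wf_state M s); last by rewrite !mul0r; ring.
by rewrite drift //; ring.
Qed.

Lemma Phi_telescope h T : h n = 0 ->
  Phi h T = Phi h 0 + \sum_(t < T) (excess h t - mass t).
Proof.
move=> hn0; rewrite -(big_mkord xpredT (fun t => excess h t - mass t)).
rewrite (telescope_sumr_eq (Phi h)) // => [|t _]; first by rewrite addrC subrK.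
by rewrite PhiS //; ring.
Qed.

Lemma sum_fresh (f : state n -> R) : (forall s, ~~ fresh s -> f s = 0) ->
  \sum_s f s = \sum_x f (x, x, finset.set0).
Proof.
move=> f0.
transitivity (\sum_(xz : bs n * bs n) \sum_(F : {set 'I_n}) f (xz, F)).
  by rewrite pair_bigA; apply: eq_bigr => -[].
transitivity (\sum_(x : bs n) \sum_(z : bs n) \sum_(F : {set 'I_n}) f (x, z, F)).
  by rewrite [in RHS]pair_bigA; apply: eq_bigr => -[].
apply: eq_bigr => x _.
rewrite (bigD1 x) //= [X in _ + X]big1 => [|z zx]; last first.
  by rewrite big1 // => F _; rewrite f0 //= (negbTE zx).
rewrite addr0 (bigD1 finset.set0) //= big1 ?addr0 // => F F0.
by rewrite f0 //= eqxx (negbTE F0).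
Qed.

End SurvivingMass.

Section TailSum.
Variables (R : numDomainType) (n : nat) (a : nat -> R).

Definition tail_sum q : R := \sum_(q <= j < n) a j.

Lemma tail_sum_n : tail_sum n = 0.
Proof. exact: big_geq. Qed.

Lemma tail_sumS q : (q < n)%N -> tail_sum q = a q + tail_sum q.+1.
Proof. exact: big_ltn. Qed.

Lemma tail_sumB i q : (i <= q)%N ->
  tail_sum i - tail_sum q = \sum_(i <= j < n) (j < q)%:R * a j.
Proof.
move=> iq; rewrite /tail_sum (big_nat_widenl q i n _ _ iq) big_mkcond -sumrB.
by apply: eq_bigr => j _; rewrite leqNgt; case: (j < q)%N; rewrite ?mul1r ?mul0r ?subr0 ?subrr.
Qed.

Hypothesis a_ge0 : forall j, 0 <= a j.

Lemma tail_sum_ge0 q : 0 <= tail_sum q.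
Proof. exact: sumr_ge0. Qed.

Lemma tail_sum_nonincr : {homo tail_sum : q r / (q <= r)%N >-> r <= q}.
Proof.
apply/nonincreasing_seqP => q; have [qn|nq] := ltnP q n.
  by rewrite [leRHS]tail_sumS // lerDr.
by rewrite /tail_sum !big_geq // ltnW.
Qed.

End TailSum.

Lemma halving_moment (R : realFieldType) (u : nat -> R) i m :
  (forall j, 0 <= u j) -> (forall j, (i <= j)%N -> 2 * u j.+1 <= u j) ->
  \sum_(i <= j < m) j%:R * u j <= (2 * i + 2)%:R * u i.
Proof.
move=> u_ge0 u_half.
have moment k : \sum_(i <= j < i + k) j%:R * u j + (2 * (i + k) + 2)%:R * u (i + k)%N
                <= (2 * i + 2)%:R * u i.
  elim: k => [|k IH]; first by rewrite addn0 big_geq // add0r.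
  rewrite addnS big_nat_recr ?leq_addr //= -addrA; apply: le_trans IH; rewrite lerD2l.
  set l := (i + k)%N.
  have -> : (2 * l.+1 + 2)%:R = (l + 2)%:R * 2 :> R by rewrite -natrM; congr _%:R; lia.
  have -> : (2 * l + 2)%:R = l%:R + (l + 2)%:R :> R by rewrite -natrD; congr _%:R; lia.
  by rewrite -mulrA [leRHS]mulrDl lerD2l ler_wpM2l ?u_half ?leq_addr.
have [mi|im] := leqP m i; first by rewrite big_geq // mulr_ge0.
have := moment (m - i)%N; rewrite subnKC; last exact: ltnW.
by apply: le_trans; rewrite lerDl mulr_ge0.
Qed.

Lemma tail_moment_bound (R : realFieldType) (X : finType) (w : X -> R) (q : X -> nat)
    n i (beta : R) : 0 <= beta -> (forall x, 0 <= w x) ->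
  (forall x, w x != 0 -> (i < q x)%N) ->
  (forall j, (i <= j)%N ->
     2 * \sum_x w x * (j.+1 < q x)%:R <= \sum_x w x * (j < q x)%:R) ->
  \sum_x w x * (tail_sum n (fun j => beta * j%:R) i
                - tail_sum n (fun j => beta * j%:R) (q x))
    <= beta * (2 * i + 2)%:R * \sum_x w x.
Proof.
move=> beta_ge0 w_ge0 w_supp w_half; set h := tail_sum n _.
pose U j := \sum_x w x * (j < q x)%:R.
have U_ge0 j : 0 <= U j by apply: sumr_ge0 => x _; rewrite mulr_ge0 ?ler0n.
have wU x : w x * (h i - h (q x)) = \sum_(i <= j < n) beta * j%:R * (w x * (j < q x)%:R).
  have [->|/w_supp iq] := eqVneq (w x) 0.
    by rewrite mul0r big1 // => j _; rewrite mul0r mulr0.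
  by rewrite tail_sumB ?(ltnW iq) // mulr_sumr; apply: eq_bigr => j _; ring.
have U_i : \sum_x w x = U i.
  apply: eq_bigr => x _; have [->|/w_supp ->] := eqVneq (w x) 0; by rewrite ?mul0r ?mulr1.
rewrite (eq_bigr _ (fun x _ => wU x)) exchange_big /= U_i -mulrA.
under eq_bigr do rewrite -mulr_sumr -mulrA.
by rewrite -mulr_sumr ler_wpM2l // halving_moment.
Qed.

Section PotentialBounds.
Variables (R : realType) (n M : nat) (h : nat -> R).

Lemma sum_bs_const (c : R) : \sum_(x : bs n) c = 2 ^+ n * c.
Proof. by rewrite sumr_const card_ffun card_bool card_ord -natrX mulr_natl. Qed.

Lemma sum_bit_false (o : 'I_n) : \sum_(x : bs n) (~~ x o)%:R = 2 ^+ n / 2 :> R.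
Proof.
have sym : \sum_(x : bs n) (x o)%:R = \sum_(x : bs n) (~~ x o)%:R :> R.
  by rewrite (reindex_inj (@flip_inj n o)); apply: eq_bigr => x _; rewrite flipE eqxx.
have total : \sum_(x : bs n) (x o)%:R + \sum_(x : bs n) (~~ x o)%:R = 2 ^+ n :> R.
  rewrite -big_split -[RHS]mulr1 -sum_bs_const /=.
  by apply: eq_bigr => x _; case: (x o); rewrite ?addr0 ?add0r.
by rewrite sym in total; lra.
Qed.

Hypothesis (h_ge0 : forall q, 0 <= h q).

Lemma potential_ge0 (s : state n) : 0 <= potential M h s.
Proof. by case: s => [[x z] F]; rewrite addr_ge0 //; case: ifP. Qed.

Lemma Phi_ge0 t : 0 <= Phi n M h t.
Proof. by apply: sumr_ge0 => s _; rewrite mulr_ge0 ?dist_ge0 ?potential_ge0. Qed.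

Lemma Phi0E : Phi n M h 0 = (2 ^+ n)^-1 * \sum_(x : bs n) (x != opt n)%:R * h (LO n x).
Proof.
rewrite /Phi (sum_fresh (f := fun s => dist R n M 0 s * potential M h s)) => [|[[x z] F] nf].
  rewrite mulr_sumr; apply: eq_bigr => x _; rewrite /dist /= ffunE !eqxx /= add0r.
  by case: (x != opt n); rewrite ?mul1r ?mulr1 ?mul0r ?mulr0.
rewrite /dist /= ffunE; case: ifP; rewrite ?mul0r // => /and3P [zx F0 _].
by rewrite /= zx F0 in nf.
Qed.

Lemma Phi0_ge : (0 < n)%N -> h 0 / 2 <= Phi n M h 0.
Proof.
move=> n_gt0; pose o := Ordinal n_gt0.
have two_n_neq0 : 2 ^+ n != 0 :> R by rewrite expf_neq0 ?pnatr_eq0.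
rewrite Phi0E -[leLHS](mulKf two_n_neq0) ler_wpM2l ?invr_ge0 ?exprn_ge0 //.
rewrite mulrCA -(sum_bit_false o) mulrC mulr_suml.
apply: ler_sum => x _; case: (boolP (x o)) => [_|xo0]; rewrite ?mul0r ?mul1r.
  by rewrite mulr_ge0 ?ler0n.
have LO0 : LO n x = 0%N.
  by apply/eqP; rewrite -leqn0 leqNgt; apply: contraNN xo0 => /(@LO_prefix _ x o).
have -> : x != opt n by rewrite -LO_lt_n LO0.
by rewrite mul1r LO0.
Qed.

Hypothesis (h_le_h0 : forall q, h q <= h 0).

Lemma Phi_le_mass t : Phi n M h t <= (M%:R + h 0) * mass R n M t.
Proof.
rewrite /Phi /mass mulr_sumr; apply: ler_sum => -[[x z] F] _.
rewrite mulrC ler_wpM2r ?dist_ge0 // lerD //.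
by case: ifP => _; rewrite ?ler0n // ler_nat leq_subr.
Qed.

Lemma Phi0_le : Phi n M h 0 <= h 0.
Proof.
rewrite Phi0E ler_pdivrMl ?exprn_gt0 // -sum_bs_const.
by apply: ler_sum => x _; case: (x != opt n); rewrite ?mul1r ?mul0r.
Qed.

End PotentialBounds.

Section UpperBound.
Variables (R : realType) (n M : nat).
Hypotheses (M_gt0 : (0 < M)%N) (M_le_n : (M <= n)%N).

(* Leaving level j takes n fresh attempts in expectation, each costing
   1 + (j/n)(M-1) evaluations. *)
Definition level_cost (j : nat) : R := n%:R + j%:R * (M%:R - 1).

Lemma level_cost_ge0 j : 0 <= level_cost j.
Proof. by rewrite addr_ge0 ?mulr_ge0 ?subr_ge0 ?ler1n. Qed.

Lemma fresh_drift_upper (s : state n) : fresh_drift M (tail_sum n level_cost) s <= 0.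
Proof.
case: s => [[x z] F] /=; case: ifP => // _.
apply: mulr_ge0_le0; first by rewrite invr_ge0.
apply: sumr_le0 => i _; case: eqP => [LOx|_]; rewrite ?mul0r // mul1r.
have LO_up : (i.+1 <= LO n (flip n x i))%N by rewrite LO_flip_at LOx.
rewrite (tail_sumS _ (ltn_ord i)) opprD addrACA subrr add0r subr_le0.
by apply: tail_sum_nonincr; [exact: level_cost_ge0 | exact: LO_up].
Qed.

Lemma mass_sum_upper T : \sum_(t < T) mass R n M t <= tail_sum n level_cost 0.
Proof.
have h_ge0 := tail_sum_ge0 n level_cost_ge0.
have h_le_h0 q := tail_sum_nonincr n level_cost_ge0 (leq0n q).
have excess_le0 : \sum_(t < T) excess n M (tail_sum n level_cost) t <= 0.
  apply: sumr_le0 => t _; apply: sumr_le0 => s _.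
  by rewrite mulr_ge0_le0 ?dist_ge0 ?fresh_drift_upper.
have := Phi_telescope M_gt0 M_le_n T (tail_sum_n n level_cost).
have := Phi_ge0 n M h_ge0 T; have := Phi0_le n M h_ge0 h_le_h0.
rewrite sumrB; lra.
Qed.

Lemma level_cost_sum_le : (0 < n)%N -> tail_sum n level_cost 0 <= 2 * n%:R ^+ 3.
Proof.
move=> n_gt0; have n_ge1 : 1 <= n%:R :> R by rewrite ler1n.
have Mn : M%:R <= n%:R :> R by rewrite ler_nat.
have nn : n%:R <= n%:R * n%:R :> R by rewrite ler_peMr.
have cost_le j : (j < n)%N -> level_cost j <= 2 * n%:R ^+ 2.
  move=> jn; have jM : j%:R * (M%:R - 1) <= n%:R * n%:R :> R.
    by rewrite ler_pM ?ler0n ?subr_ge0 ?ler1n ?ler_nat ?(ltnW jn) //; lra.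
  by rewrite /level_cost expr2; lra.
apply: le_trans (_ : \sum_(0 <= j < n) 2 * n%:R ^+ 2 <= _).
  by apply: ler_sum_nat => j /andP [_ /cost_le].
by rewrite sumr_const_nat subn0 -mulr_natr exprS; lra.
Qed.

End UpperBound.

Section LowerBound.
Variables (R : realType) (n M : nat).
Hypotheses (M_gt0 : (0 < M)%N) (M_le_n : (M <= n)%N).

Definition level_weight t (i : 'I_n) (x : bs n) : R :=
  (LO n x == i)%:R * dist R n M t (x, x, finset.set0).

Lemma level_weight_ge0 t i x : 0 <= level_weight t i x.
Proof. by rewrite mulr_ge0 ?ler0n ?dist_ge0. Qed.

Lemma level_weight_flip t (i p : 'I_n) : (i < p)%N ->
  \sum_x level_weight t i x * (p < LO n (flip n x i))%:R =
  \sum_x level_weight t i x * (LO n (flip n x i) == p)%:R.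
Proof.
move=> ip; rewrite (reindex_inj (@flip_inj n p)); apply: eq_bigr => x _.
have [xp|px] := ltnP (LO n x) p.
  rewrite /level_weight LO_flip_above // flipC LO_flip_at.
  by have /= -> := dist_flip_state R M t (s := (x, x, finset.set0)) xp.
rewrite /level_weight.
have -> : (LO n x == i) = false by apply: gtn_eqF; apply: leq_trans px.
have -> : (LO n (flip n x p) == i) = false.
  by apply: gtn_eqF; apply: leq_trans ip _; rewrite LO_flip_ge.
by rewrite !mul0r.
Qed.

Lemma level_halving t (i : 'I_n) j : (i <= j)%N ->
  2 * \sum_x level_weight t i x * (j.+1 < LO n (flip n x i))%:R <=
  \sum_x level_weight t i x * (j < LO n (flip n x i))%:R.
Proof.
move=> ij; have [jn|nj] := ltnP j.+1 n; last first.
  rewrite big1 ?mulr0 => [|x _]; last by rewrite ltnNge (leq_trans (LO_le _) nj) mulr0.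
  by apply: sumr_ge0 => x _; rewrite mulr_ge0 ?level_weight_ge0.
have split_j x : (j < LO n (flip n x i))%:R =
    (j.+1 < LO n (flip n x i))%:R + (LO n (flip n x i) == j.+1)%:R :> R.
  rewrite -natrD; congr _%:R; rewrite [(j < _)%N]leq_eqVlt eq_sym.
  by case: eqP => [->|]; rewrite ?ltnn ?addn0.
under [in leRHS]eq_bigr do rewrite split_j mulrDr.
rewrite big_split /= -(level_weight_flip t (p := Ordinal jn)) //=; lra.
Qed.

Definition gain : R := (M%:R - 1) / 4.

Lemma gain_ge0 : 0 <= gain.
Proof. by rewrite divr_ge0 ?subr_ge0 ?ler1n. Qed.

Lemma excess_lower t : 0 <= excess n M (tail_sum n (fun j => gain * j%:R)) t.
Proof.
set h := tail_sum n _.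
rewrite /excess (sum_fresh (f := fun s => dist R n M t s * fresh_drift M h s)); last first.
  by move=> [[x z] F] /= /negbTE ->; rewrite mulr0.
have -> : \sum_x dist R n M t (x, x, finset.set0) * fresh_drift M h (x, x, finset.set0) =
    n%:R^-1 * \sum_(i < n) \sum_x level_weight t i x *
      (level_cost R n M i + h (LO n (flip n x i)) - h i).
  rewrite exchange_big mulr_sumr; apply: eq_bigr => x _ /=; rewrite !eqxx /= mulrCA; congr (_ * _).
  by rewrite mulr_sumr; apply: eq_bigr => i _; rewrite /level_weight /level_cost; ring.
rewrite mulr_ge0 ?invr_ge0 // sumr_ge0 // => i _.
set W := \sum_x level_weight t i x.
have W_ge0 : 0 <= W by apply: sumr_ge0 => x _; apply: level_weight_ge0.
have w_supp x : level_weight t i x != 0 -> (i < LO n (flip n x i))%N.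
  by rewrite /level_weight LO_flip_at mulf_eq0 negb_or pnatr_eq0 eqb0 negbK => /andP [].
have loss := @tail_moment_bound _ _ (level_weight t i) (fun x => LO n (flip n x i)) n i gain
  gain_ge0 (level_weight_ge0 t i) w_supp (level_halving t (i := i)).
have gain_le : gain * (2 * i + 2)%:R * W <= level_cost R n M i * W.
  rewrite ler_wpM2r //.
  have := ler0n R i; have := ler0n R n; have : M%:R <= n%:R :> R by rewrite ler_nat.
  have : 0 <= i%:R * (M%:R - 1) :> R by rewrite mulr_ge0 ?ler0n ?subr_ge0 ?ler1n.
  by rewrite /gain /level_cost natrD natrM; lra.
have -> : \sum_x level_weight t i x * (level_cost R n M i + h (LO n (flip n x i)) - h i) =
    level_cost R n M i * W - \sum_x level_weight t i x * (h i - h (LO n (flip n x i))).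
  by rewrite mulr_sumr -sumrB; apply: eq_bigr => x _; ring.
by rewrite subr_ge0 (le_trans loss).
Qed.

Lemma mass_sum_lower : (0 < n)%N ->
  exists T, tail_sum n (fun j => gain * j%:R) 0 / 4 <= \sum_(t < T) mass R n M t.
Proof.
move=> n_gt0; set h := tail_sum n _.
have a_ge0 j : 0 <= gain * j%:R by rewrite mulr_ge0 ?gain_ge0 ?ler0n.
have h_ge0 := tail_sum_ge0 n a_ge0.
have h_le_h0 q := tail_sum_nonincr n a_ge0 (leq0n q).
set T := Num.bound (M%:R + h 0); exists T.
have T_ge : M%:R + h 0 <= T%:R by apply/ltW/archi_boundP; rewrite addr_ge0 ?ler0n.
have mass_T : T%:R * mass R n M T <= \sum_(t < T) mass R n M t.
  have -> : T%:R * mass R n M T = \sum_(t < T) mass R n M T.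
    by rewrite sumr_const card_ord mulr_natl.
  by apply: ler_sum => t _; apply/mass_nonincr/ltnW.
have excess_ge0 : 0 <= \sum_(t < T) excess n M h t by apply: sumr_ge0 => t _; apply: excess_lower.
have := Phi_telescope M_gt0 M_le_n T (tail_sum_n n (fun j => gain * j%:R)).
have := Phi_le_mass n M h_le_h0 T; have := ler_wpM2r (mass_ge0 R n M T) T_ge.
have := Phi0_ge M h_ge0 n_gt0; have := Phi_ge0 n M h_ge0 T.
rewrite sumrB /h; lra.
Qed.

End LowerBound.

Section Runtime.
Variables (R : realType) (n M : nat).

Lemma surv_ge0 t : 0 <= surv R n M t.
Proof. by case: t => [|t] //=; apply: mass_ge0. Qed.

Lemma surv_partial_sum T :
  \sum_(0 <= t < T.+1) surv R n M t = 1 + \sum_(t < T) mass R n M t.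
Proof. by rewrite big_mkord big_ord_recl. Qed.

Let surv_EFin_ge0 k : (0 <= k)%N -> true -> (0 <= (surv R n M k)%:E)%E.
Proof. by rewrite lee_fin surv_ge0. Qed.

Lemma expected_runtime_ge T :
  ((1 + \sum_(t < T) mass R n M t)%:E <= expected_runtime R n M)%E.
Proof.
by rewrite -surv_partial_sum -sumEFin; apply: nneseries_lim_ge.
Qed.

Lemma expected_runtime_le (b : R) : (forall T, \sum_(t < T) mass R n M t <= b) ->
  (expected_runtime R n M <= (1 + b)%:E)%E.
Proof.
move=> mass_le; apply: lime_le (is_cvg_nneseries surv_EFin_ge0) _; apply: nearW => T.
rewrite sumEFin lee_fin; apply: le_trans (_ : _ <= \sum_(0 <= t < T.+1) surv R n M t) _.
  by rewrite big_nat_recr //= lerDl surv_ge0.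
by rewrite surv_partial_sum lerD2l.
Qed.

End Runtime.

Lemma sum_natr_id (R : numDomainType) m :
  2 * \sum_(0 <= j < m) (j%:R : R) = m%:R * (m%:R - 1).
Proof.
elim: m => [|m IH]; first by rewrite big_geq // mulr0 mul0r.
by rewrite big_nat_recr //= mulrDr IH -natr1; ring.
Qed.

Section Bounds.
Variables (R : realType) (n M : nat).
Hypotheses (M_gt0 : (0 < M)%N) (M_le_n : (M <= n)%N) (n_gt0 : (0 < n)%N).

Lemma expected_runtime_upper : (expected_runtime R n M <= (3 * n%:R ^+ 3)%:E)%E.
Proof.
apply: le_trans (expected_runtime_le (mass_sum_upper R M_gt0 M_le_n)) _.
have := level_cost_sum_le R M_gt0 M_le_n n_gt0.
have : 1 <= n%:R ^+ 3 :> R by rewrite exprn_ege1 ?ler1n.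
by rewrite lee_fin; lra.
Qed.

Lemma expected_runtime_lower :
  (((M%:R - 1) * n%:R * (n%:R - 1) / 32)%:E <= expected_runtime R n M)%E.
Proof.
have [T mass_ge] := mass_sum_lower R M_gt0 M_le_n n_gt0.
apply: le_trans (expected_runtime_ge R n M T); rewrite lee_fin.
rewrite /tail_sum -mulr_sumr /gain in mass_ge.
by rewrite -[(M%:R - 1) * n%:R * _]mulrA -sum_natr_id; lra.
Qed.

End Bounds.

Lemma cubic_lower_bound (R : realFieldType) (c x : R) : 2 <= x -> 2 <= c * x ->
  c / 128 * x ^+ 3 <= (c * x - 1) * x * (x - 1) / 32.
Proof.
move=> x_ge2 cx_ge2.
have prod : c * x / 2 * (x / 2) <= (c * x - 1) * (x - 1) by apply: ler_pM; lra.
have x32 : 0 <= x / 32 by lra.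
have := ler_wpM2r x32 prod.
by rewrite -!mulrA !exprS expr0; lra.
Qed.

Theorem theorem4 (R : realType) (c : R) (hc0 : 0 < c) (hc1 : c <= 1) :
  exists (a b : R), [/\ 0 < a, 0 < b &
    exists N : nat, forall n M : nat, (N <= n)%N -> M%:R = c * n%:R ->
      ((a * n%:R ^+ 3)%:E <= expected_runtime R n M <= (b * n%:R ^+ 3)%:E)%E].
Proof.
exists (c / 128), 3; split => //; first by rewrite divr_gt0.
pose N := Num.bound (2 / c); exists N.+2 => n M N_le_n M_eq.
have n_gt0 : (0 < n)%N by apply: leq_trans N_le_n.
have n_ge2 : 2 <= n%:R :> R by rewrite (ler_nat R 2); lia.
have n_large : 2 / c <= n%:R.
  apply/ltW/(lt_le_trans (archi_boundP _)); first by rewrite divr_ge0 ?ltW.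
  by rewrite ler_nat; lia.
have cn_ge2 : 2 <= c * n%:R by rewrite -ler_pdivrMl // mulrC.
have M_gt0 : (0 < M)%N by rewrite -(ltr_nat R) M_eq; lra.
have M_le_n : (M <= n)%N by rewrite -(ler_nat R) M_eq ler_piMl.
rewrite expected_runtime_upper // andbT.
apply: le_trans (expected_runtime_lower R M_gt0 M_le_n n_gt0); rewrite lee_fin M_eq.
exact: cubic_lower_bound.
Qed.
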